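(* Let $\alpha,\beta,\gamma,\delta\in\mathbb{R}$ with $\alpha+\delta\neq 0$ and $\alpha\gamma=0$, and let $G_7$ be the connected, simply connected Lie group whose Lie algebra $\mathfrak{g}_7$ has a basis $\{e_1,e_2,e_3\}$ with $[e_1,e_2]=-\alpha e_1-\beta e_2-\beta e_3$, $[e_1,e_3]=\alpha e_1+\beta e_2+\beta e_3$, $[e_2,e_3]=\gamma e_1+\delta e_2+\delta e_3$, equipped with the left-invariant Lorentzian metric $g$ for which $\{e_1,e_2,e_3\}$ is pseudo-orthonormal with $e_3$ timelike, and with the product structure $J$. Let $\lambda_0,c\in\mathbb{R}$. Then there exists a derivation $D$ of $\mathfrak{g}_7$ with $\widetilde{\mathrm{Ric}}^1=(s^1\lambda_0+c)\mathrm{Id}+D$ (i.e. $(G_7,g,J)$ is an algebraic Schouten soliton associated to the Kobayashi–Nomizu connection $\nabla^1$) if and only if $\alpha\neq0$, $\beta=\gamma=0$, $\delta=\frac12\alpha$ and $c=-\frac12\alpha^2+2\alpha^2\lambda_0$.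
   Context: Pseudo-orthonormal means $g(e_1,e_1)=g(e_2,e_2)=1$, $g(e_3,e_3)=-1$, $g(e_i,e_j)=0$ for $i\neq j$; left-invariant tensors are identified with their values on $\mathfrak{g}$. $\nabla$ is the Levi-Civita connection of $g$. The product structure $J$ is the left-invariant endomorphism with $Je_1=e_1$, $Je_2=e_2$, $Je_3=-e_3$. The canonical connection is $\nabla^0_XY=\nabla_XY-\frac12(\nabla_XJ)JY$, and the Kobayashi–Nomizu connection is $\nabla^1_XY=\nabla^0_XY-\frac14[(\nabla_YJ)JX-(\nabla_{JY}J)X]$. For $k=0,1$: $R^k(X,Y)Z=\nabla^k_X\nabla^k_YZ-\nabla^k_Y\nabla^k_XZ-\nabla^k_{[X,Y]}Z$; $\rho^k(X,Y)=-g(R^k(X,e_1)Y,e_1)-g(R^k(X,e_2)Y,e_2)+g(R^k(X,e_3)Y,e_3)$; $\widetilde\rho^k(X,Y)=\frac12(\rho^k(X,Y)+\rho^k(Y,X))$; $\widetilde{\mathrm{Ric}}^k$ is defined by $\widetilde\rho^k(X,Y)=g(\widetilde{\mathrm{Ric}}^k(X),Y)$; and $s^k=\widetilde\rho^k(e_1,e_1)+\widetilde\rho^k(e_2,e_2)-\widetilde\rho^k(e_3,e_3)$. A derivation of $\mathfrak{g}$ is a linear map $D$ with $D[X,Y]=[DX,Y]+[X,DY]$. $(G,g,J)$ is an algebraic Schouten soliton associated to $\nabla^k$ (with real constants $\lambda_0,c$) if $\widetilde{\mathrm{Ric}}^k=(s^k\lambda_0+c)\mathrm{Id}+D$ for some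 derivation $D$. *)

From HB Require Import structures.
From mathcomp Require Import all_boot all_order all_algebra.
From mathcomp Require Import reals.
Set Implicit Arguments. Unset Strict Implicit. Unset Printing Implicit Defensive.
Import Order.TTheory GRing.Theory Num.Theory.
Local Open Scope ring_scope.

(* The Lie algebra g = R^3, elements are row vectors x = x1 e1 + x2 e2 + x3 e3,
   stored as 'rV[R]_3 with indices 0,1,2 standing for e1,e2,e3.
   Left-invariant tensors are identified with their values on g. *)
Section Defs.
Variable R : realType.
Notation vec := 'rV[R]_3.

Definition i1 : 'I_3 := inord 0.
Definition i2 : 'I_3 := inord 1.
Definition i3 : 'I_3 := inord 2.

Definition comp (x : vec) (i : 'I_3) : R := x ord0 i.
Definition ebasis (i : 'I_3) : vec := \row_(k < 3) (k == i)%:R.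
Definition e1 := ebasis i1.
Definition e2 := ebasis i2.
Definition e3 := ebasis i3.

(* The bracket of g_7, extended bilinearly from
   [e1,e2] = -a e1 - b e2 - b e3, [e1,e3] = a e1 + b e2 + b e3,
   [e2,e3] = gm e1 + dl e2 + dl e3. *)
Definition br7 (a b gm dl : R) (x y : vec) : vec :=
  let p12 := comp x i1 * comp y i2 - comp x i2 * comp y i1 in
  let p13 := comp x i1 * comp y i3 - comp x i3 * comp y i1 in
  let p23 := comp x i2 * comp y i3 - comp x i3 * comp y i2 in
  p12 *: (- a *: e1 - b *: e2 - b *: e3)
  + p13 *: (a *: e1 + b *: e2 + b *: e3)
  + p23 *: (gm *: e1 + dl *: e2 + dl *: e3).

Definition eps (i : 'I_3) : R := if i == i3 then -1 else 1.

Definition gmet (x y : vec) : R := \sum_(i < 3) eps i * comp x i * comp y i.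

Definition Jst (x : vec) : vec := \row_(k < 3) (eps k * comp x k).

Section Connections.
Variable br : vec -> vec -> vec.

(* Levi-Civita connection on left-invariant fields (Koszul formula):
   2 g(nabla_X Y, Z) = g([X,Y],Z) - g([Y,Z],X) + g([Z,X],Y),
   and nabla_X Y = sum_k g(e_k,e_k) g(nabla_X Y, e_k) e_k. *)
Definition nablaLC (X Y : vec) : vec :=
  \sum_(k < 3) (eps k * ((gmet (br X Y) (ebasis k) - gmet (br Y (ebasis k)) X
                          + gmet (br (ebasis k) X) Y) / 2)) *: ebasis k.

Definition nablaJ (X Y : vec) : vec := nablaLC X (Jst Y) - Jst (nablaLC X Y).

Definition nabla0 (X Y : vec) : vec := nablaLC X Y - (1/2) *: nablaJ X (Jst Y).

Definition nabla1 (X Y : vec) : vec :=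
  nabla0 X Y - (1/4) *: (nablaJ Y (Jst X) - nablaJ (Jst Y) X).

Definition curv1 (X Y Z : vec) : vec :=
  nabla1 X (nabla1 Y Z) - nabla1 Y (nabla1 X Z) - nabla1 (br X Y) Z.

Definition rho1 (X Y : vec) : R :=
  - gmet (curv1 X e1 Y) e1 - gmet (curv1 X e2 Y) e2 + gmet (curv1 X e3 Y) e3.

Definition rho1t (X Y : vec) : R := (rho1 X Y + rho1 Y X) / 2.

(* g(Ric X, Y) = rho1t(X,Y) *)
Definition Ric1t (X : vec) : vec :=
  \sum_(k < 3) (eps k * rho1t X (ebasis k)) *: ebasis k.

Definition scal1 : R := rho1t e1 e1 + rho1t e2 e2 - rho1t e3 e3.

Definition is_derivation (D : 'M[R]_3) : Prop :=
  forall X Y : vec, br X Y *m D = br (X *m D) Y + br X (Y *m D).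

Definition alg_schouten_soliton1 (lambda0 c : R) : Prop :=
  exists D : 'M[R]_3, is_derivation D /\
    forall X : vec, Ric1t X = (scal1 * lambda0 + c) *: X + X *m D.

End Connections.
End Defs.

From Pilot Require Import Defs.
From HB Require Import structures.
From mathcomp Require Import all_boot all_order all_algebra.
From mathcomp Require Import reals ring lra.
Set Implicit Arguments. Unset Strict Implicit. Unset Printing Implicit Defensive.
Import Order.TTheory GRing.Theory Num.Theory.
Local Open Scope ring_scope.

(* Ric^1 acts by a matrix, so the soliton equation forces
   D = Ric^1 - (s^1 lambda0 + c) Id, and the question is when this shifted Ricci
   operator is a derivation.  On the pairs (e1,e2), (e1,e3) the derivation
   identity rules out beta <> 0 (it would force alpha = -3 delta and then
   beta^2 + 10 delta^2 = 0); with beta = 0 the pairs (e1,e2), (e1,e3), (e2,e3)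
   give delta = alpha/2 and s^1 lambda0 + c = -alpha^2/2, because
   alpha + delta <> 0; finally alpha gamma = 0 gives gamma = 0. *)

Local Notation cp := Defs.comp.

Section SchoutenSoliton.
Variables (R : realType) (br : 'rV[R]_3 -> 'rV[R]_3 -> 'rV[R]_3) (M : 'M[R]_3).
Hypothesis Ric1tM : forall x, Ric1t br x = x *m M.

Lemma alg_schouten_soliton1E lambda0 c :
  alg_schouten_soliton1 br lambda0 c <->
  is_derivation br (M - (scal1 br * lambda0 + c)%:M).
Proof.
set k := _ + c; split=> [[D [derD RicD]] | derMk].
  suff -> : M - k%:M = D by [].
  apply/row_matrixP => i; rewrite !rowE mulmxBr mul_mx_scalar -Ric1tM RicD.
  by rewrite addrAC subrr add0r.
exists (M - k%:M); split=> // x.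
by rewrite Ric1tM mulmxBr mul_mx_scalar addrC subrK.
Qed.

End SchoutenSoliton.

Section Coordinates.
Variable R : realType.
Local Notation vec := 'rV[R]_3.
Local Notation R3 := (R * R * R)%type.
Implicit Types (u v x : vec) (p q : R3).

Lemma ord3P (j : 'I_3) : [\/ j = i1, j = i2 | j = i3].
Proof.
by case: j => -[|[|[|m]]] lt_j //; [apply: Or31 | apply: Or32 | apply: Or33];
  apply/val_inj; rewrite /= inordK.
Qed.

Lemma sum_ord3 (V : nmodType) (F : 'I_3 -> V) :
  \sum_(k < 3) F k = F i1 + F i2 + F i3.
Proof.
rewrite !big_ord_recr big_ord0 /= add0r.
by congr (F _ + F _ + F _); apply/val_inj; rewrite /= inordK.
Qed.

Lemma ord3_neq : ((i1 == i2) = false) * ((i1 == i3) = false) * ((i2 == i1) = false)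
  * ((i2 == i3) = false) * ((i3 == i1) = false) * ((i3 == i2) = false).
Proof. by rewrite -!val_eqE /= !inordK. Qed.

Lemma epsE : (eps R i1 = 1) * (eps R i2 = 1) * (eps R i3 = -1).
Proof. by rewrite /eps !ord3_neq eqxx. Qed.

Lemma comp_ebasis (i k : 'I_3) : cp (ebasis R k) i = (i == k)%:R.
Proof. by rewrite /cp mxE. Qed.

Definition coords x : R3 := (cp x i1, cp x i2, cp x i3).

Definition addc p q : R3 :=
  let: (p1, p2, p3) := p in let: (q1, q2, q3) := q in (p1 + q1, p2 + q2, p3 + q3).
Definition subc p q : R3 :=
  let: (p1, p2, p3) := p in let: (q1, q2, q3) := q in (p1 - q1, p2 - q2, p3 - q3).
Definition scalec (s : R) p : R3 := let: (p1, p2, p3) := p in (s * p1, s * p2, s * p3).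
Definition Jc p : R3 := let: (p1, p2, p3) := p in (p1, p2, - p3).
Definition metc p q : R :=
  let: (p1, p2, p3) := p in let: (q1, q2, q3) := q in p1 * q1 + p2 * q2 - p3 * q3.
Definition mulmxc p (A : 'M[R]_3) : R3 :=
  let: (p1, p2, p3) := p in
  let col j := p1 * A i1 j + p2 * A i2 j + p3 * A i3 j in (col i1, col i2, col i3).

Lemma coords_inj : injective coords.
Proof.
move=> u v [eq1 eq2 eq3]; apply/matrixP => i j; rewrite [i]ord1.
by case: (ord3P j) => ->.
Qed.

Lemma coords_add u v : coords (u + v) = addc (coords u) (coords v).
Proof. by rewrite /coords /cp !mxE. Qed.

Lemma coords_sub u v : coords (u - v) = subc (coords u) (coords v).
Proof. by rewrite /coords /cp !mxE. Qed.

Lemma coords_scale (s : R) u : coords (s *: u) = scalec s (coords u).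
Proof. by rewrite /coords /cp !mxE. Qed.

Lemma coords_Jst u : coords (Jst u) = Jc (coords u).
Proof. by rewrite /coords /cp !mxE -/(cp _ _) !epsE /= !mul1r mulN1r. Qed.

Lemma coords_mulmx u (A : 'M[R]_3) : coords (u *m A) = mulmxc (coords u) A.
Proof. by rewrite /coords /cp !mxE !sum_ord3. Qed.

Lemma coords_ebasis :
  (coords (e1 R) = (1, 0, 0)) * (coords (e2 R) = (0, 1, 0)) * (coords (e3 R) = (0, 0, 1)).
Proof. by rewrite /coords /e1 /e2 /e3 !comp_ebasis !eqxx !ord3_neq. Qed.

Lemma gmet_coords u v : gmet u v = metc (coords u) (coords v).
Proof. by rewrite /gmet sum_ord3 !epsE /= !mul1r mulN1r mulNr. Qed.

Lemma mulmxc_sub_scalar p (A : 'M[R]_3) (s : R) :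
  mulmxc p (A - s%:M) = subc (mulmxc p A) (scalec s p).
Proof.
case: p => [[p1 p2] p3]; rewrite /= !mxE !eqxx !ord3_neq /=.
by congr (_, _, _); ring.
Qed.

End Coordinates.

(* The coordinate operations are [let]-patterns on triples, so [cbv] evaluates
   them while leaving the ring operations folded. *)
Ltac coords_reduce :=
  cbv beta iota zeta delta [addc subc scalec Jc metc mulmxc].

Section G7.
Variables (R : realType) (a b gm dl : R).
Local Notation vec := 'rV[R]_3.
Local Notation R3 := (R * R * R)%type.
Local Notation br := (br7 a b gm dl).
Implicit Types (x y : vec) (p q : R3).

Definition br7c p q : R3 :=
  let: (p1, p2, p3) := p in let: (q1, q2, q3) := q in
  let p12 := p1 * q2 - p2 * q1 in
  let p13 := p1 * q3 - p3 * q1 in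
  let p23 := p2 * q3 - p3 * q2 in
  (a * (p13 - p12) + gm * p23, b * (p13 - p12) + dl * p23, b * (p13 - p12) + dl * p23).

Lemma coords_br7 x y : coords (br x y) = br7c (coords x) (coords y).
Proof.
rewrite /br7 !(coords_sub, coords_add, coords_scale) !coords_ebasis /coords.
by coords_reduce; rewrite /br7c; congr (_, _, _); ring.
Qed.

Definition nablaLC7c p q : R3 :=
  let: (p1, p2, p3) := p in let: (q1, q2, q3) := q in
  (a * p1 * (q3 - q2) + b * (p3 * q2 + p2 * q3 - p3 * q3 - p2 * q2)
     + gm / 2 * (p2 * q3 - p3 * q2),
   a * p1 * q1 + b * (p2 - p3) * q1 + gm / 2 * (p3 * q1 + p1 * q3) + dl * (p2 - p3) * q3,
   a * p1 * q1 + b * (p2 - p3) * q1 + gm / 2 * (p2 * q1 + p1 * q2) + dl * (p2 - p3) * q2).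

Lemma coords_nablaLC7 x y : coords (nablaLC br x y) = nablaLC7c (coords x) (coords y).
Proof.
rewrite /nablaLC sum_ord3 !(coords_add, coords_scale) !gmet_coords !coords_br7.
rewrite !coords_ebasis !epsE /coords; coords_reduce; rewrite /nablaLC7c /br7c.
by congr (_, _, _); field.
Qed.

Definition nabla1_7c p q : R3 :=
  let: (p1, p2, p3) := p in let: (q1, q2, q3) := q in
  (- a * p1 * q2 - a * p3 * q1 - b * p2 * q2 - gm * p3 * q2,
   a * p1 * q1 + b * p2 * q1 - b * p3 * q1 - dl * p3 * q2,
   b * p1 * q3 + dl * p2 * q3).

(* Abstracting [nablaLC br] keeps [rewrite] from unfolding it when it compares
   the occurrences of a rewrite pattern; the same device is used below. *)
Lemma coords_nabla1_7 x y : coords (nabla1 br x y) = nabla1_7c (coords x) (coords y).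
Proof.
have := coords_nablaLC7; rewrite /nabla1 /nabla0 /nablaJ; move: (nablaLC br) => n nE.
rewrite !(coords_sub, coords_scale, coords_Jst, nE) /coords; coords_reduce.
by rewrite /nablaLC7c /nabla1_7c; congr (_, _, _); field.
Qed.

Definition curv1_7c p q r : R3 :=
  subc (subc (nabla1_7c p (nabla1_7c q r)) (nabla1_7c q (nabla1_7c p r)))
       (nabla1_7c (br7c p q) r).

Lemma coords_curv1_7 x y z :
  coords (curv1 br x y z) = curv1_7c (coords x) (coords y) (coords z).
Proof.
have := coords_nabla1_7; rewrite /curv1; move: (nabla1 br) => n nE.
by rewrite !coords_sub !nE coords_br7.
Qed.

Lemma rho1_br7_coords x y : rho1 br x y =
  - metc (curv1_7c (coords x) (1, 0, 0) (coords y)) (1, 0, 0)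
  - metc (curv1_7c (coords x) (0, 1, 0) (coords y)) (0, 1, 0)
  + metc (curv1_7c (coords x) (0, 0, 1) (coords y)) (0, 0, 1).
Proof.
have := coords_curv1_7; have := coords_ebasis R; rewrite /rho1.
move: (curv1 br) (e1 R) (e2 R) (e3 R) => cv u1 u2 u3 uE cvE.
by rewrite !gmet_coords !cvE !uE.
Qed.

Definition rho1t7 x y :=
  - a ^+ 2 * cp x i1 * cp y i1 - (b * gm + b ^+ 2 + a ^+ 2) * cp x i2 * cp y i2
  + (b * dl - a * b) / 2 * (cp x i1 * cp y i2 + cp x i2 * cp y i1)
  + (b * dl + a * b) * (cp x i1 * cp y i3 + cp x i3 * cp y i1)
  + (dl ^+ 2 + (b * gm + a * dl) / 2) * (cp x i2 * cp y i3 + cp x i3 * cp y i2).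

Lemma rho1t_br7 x y : rho1t br x y = rho1t7 x y.
Proof.
have := rho1_br7_coords; rewrite /rho1t; move: (rho1 br) => r rE.
rewrite !rE /rho1t7 /coords /curv1_7c /nabla1_7c /br7c; coords_reduce.
by field.
Qed.

Lemma scal1_br7 : scal1 br = - (b * gm) - b ^+ 2 - 2 * a ^+ 2.
Proof.
have := rho1t_br7; rewrite /scal1; move: (rho1t br) => r rE.
by rewrite !rE /rho1t7 /e1 /e2 /e3 !comp_ebasis !eqxx !ord3_neq /=; field.
Qed.

Definition Ric1t7 : 'M[R]_3 :=
  \matrix_(i < 3, j < 3) (eps R j * rho1t7 (ebasis R i) (ebasis R j)).

Definition Ric1t7c p : R3 :=
  let: (p1, p2, p3) := p in
  (- a ^+ 2 * p1 + (b * dl - a * b) / 2 * p2 + (b * dl + a * b) * p3,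
   (b * dl - a * b) / 2 * p1 - (b * gm + b ^+ 2 + a ^+ 2) * p2
     + (dl ^+ 2 + (b * gm + a * dl) / 2) * p3,
   - (b * dl + a * b) * p1 - (dl ^+ 2 + (b * gm + a * dl) / 2) * p2).

Lemma mulmxc_Ric1t7 p : mulmxc p Ric1t7 = Ric1t7c p.
Proof.
case: p => [[p1 p2] p3]; rewrite /= !mxE /rho1t7 !comp_ebasis !eqxx !ord3_neq !epsE /=.
by congr (_, _, _); field.
Qed.

Lemma Ric1t_br7 x : Ric1t br x = x *m Ric1t7.
Proof.
have := rho1t_br7; rewrite /Ric1t; move: (rho1t br) => r rE.
apply: coords_inj; rewrite sum_ord3 coords_mulmx mulmxc_Ric1t7.
rewrite !(coords_add, coords_scale) !rE -/(e1 R) -/(e2 R) -/(e3 R) !coords_ebasis.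
rewrite /coords /Ric1t7c; coords_reduce.
by rewrite /rho1t7 !comp_ebasis !eqxx !ord3_neq !epsE /=; congr (_, _, _); field.
Qed.

Lemma derivation7_coords (A : 'M[R]_3) x y : is_derivation br A ->
  mulmxc (br7c (coords x) (coords y)) A =
  addc (br7c (mulmxc (coords x) A) (coords y)) (br7c (coords x) (mulmxc (coords y) A)).
Proof.
move/(_ x y)/(congr1 (@coords _)).
by rewrite coords_add !coords_br7 !coords_mulmx coords_br7.
Qed.

End G7.

Section ShiftedRicciDerivation.
Variables (R : realType) (a b gm dl k : R).
Local Notation br := (br7 a b gm dl).
Local Notation D := (Ric1t7 a b gm dl - k%:M).

Ltac derivation_at derD u v :=
  have := derivation7_coords u v derD;
  rewrite !coords_ebasis !mulmxc_sub_scalar !mulmxc_Ric1t7 /br7c /Ric1t7c; coords_reduce;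
  rewrite ?(mulr0, mul0r, mulr1, mul1r, addr0, add0r, subr0, sub0r).

Lemma derivation_Ric1t7_shift_b0 : a + dl != 0 -> is_derivation br D -> b = 0.
Proof.
move=> had derD; have [//|b0] := eqVneq b 0.
derivation_at derD (e1 R) (e2 R); case=> _ e122 e123.
derivation_at derD (e1 R) (e3 R); case=> _ _ e133.
have k122 : k + a ^+ 2 / 2 + 3 / 2 * a * dl + dl ^+ 2 = 0.
  by apply: (mulfI b0); rewrite mulr0; lra.
have k123 : k + a ^+ 2 - a * dl + b ^+ 2 - dl ^+ 2 = 0.
  by apply: (mulfI b0); rewrite mulr0; lra.
have k133 : 2 * k - a * dl - dl ^+ 2 = 0.
  by apply: (mulfI b0); rewrite mulr0; lra.
have a3dl : a = - 3 * dl.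
  have : (a + dl) * (a + 3 * dl) = (a + dl) * 0 by lra.
  by move/(mulfI had); lra.
have b2_pos : 0 < b ^+ 2 by rewrite lt_def sqr_ge0 sqrf_eq0 b0.
have := sqr_ge0 dl; rewrite a3dl in k123 k133; lra.
Qed.

Lemma derivation_Ric1t7_shift_params :
  a + dl != 0 -> b = 0 -> is_derivation br D -> dl = a / 2 /\ k = - a ^+ 2 / 2.
Proof.
move=> had b0 derD.
derivation_at derD (e1 R) (e2 R); case=> e121 _ _.
derivation_at derD (e1 R) (e3 R); case=> e131 _ _.
derivation_at derD (e2 R) (e3 R); case=> _ e232 e233.
rewrite b0 in e121 e131 e232 e233.
have [u0 v0] : k + a * dl / 2 + dl ^+ 2 = 0 /\ k + a ^+ 2 - a * dl / 2 - dl ^+ 2 = 0.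
  have [a0|a_neq0] := eqVneq a 0.
    rewrite a0 add0r in had.
    by split; apply: (mulfI had); rewrite mulr0; lra.
  by split; apply: (mulfI a_neq0); rewrite mulr0; lra.
have : (a + dl) * (2 * dl - a) = (a + dl) * 0 by lra.
move/(mulfI had) => dl2a.
have hdl : dl = a / 2 by lra.
by split=> //; rewrite hdl in u0; lra.
Qed.

Lemma derivation_Ric1t7_shift :
  b = 0 -> gm = 0 -> dl = a / 2 -> k = - a ^+ 2 / 2 -> is_derivation br D.
Proof.
move=> b0 gm0 hdl hk x y; apply: coords_inj.
rewrite !(coords_add, coords_mulmx, coords_br7) !mulmxc_sub_scalar !mulmxc_Ric1t7 /coords.
coords_reduce; rewrite /br7c /Ric1t7c.
by rewrite b0 gm0 hdl hk; congr (_, _, _); field.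
Qed.

Lemma derivation_Ric1t7_shiftP : a + dl != 0 -> a * gm = 0 ->
  is_derivation br D <-> [/\ a != 0, b = 0, gm = 0, dl = a / 2 & k = - a ^+ 2 / 2].
Proof.
move=> had hag; split=> [derD | [_ b0 gm0 hdl hk]]; last exact: derivation_Ric1t7_shift.
have b0 := derivation_Ric1t7_shift_b0 had derD.
have [hdl hk] := derivation_Ric1t7_shift_params had b0 derD.
have a0 : a != 0 by apply: contraNneq had => a0; rewrite hdl a0 mul0r addr0.
by split=> //; apply: (mulfI a0); rewrite mulr0.
Qed.

End ShiftedRicciDerivation.

Theorem theorem4p15 (R : realType) (a b gm dl lambda0 c : R)
  (had : a + dl != 0) (hag : a * gm = 0) :
  alg_schouten_soliton1 (br7 a b gm dl) lambda0 c <->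
  [/\ a != 0, b = 0, gm = 0, dl = a / 2 &
      c = - (a ^+ 2) / 2 + 2 * a ^+ 2 * lambda0].
Proof.
rewrite (alg_schouten_soliton1E (Ric1t_br7 a b gm dl)).
rewrite (derivation_Ric1t7_shiftP _ _ had hag) scal1_br7.
by split=> -[a0 b0 gm0 hdl hk]; split=> //; rewrite b0 gm0 in hk *; lra.
Qed.
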